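(* Let $T$ be a tree and let $T'\subseteq T$ be a nonempty subset which is open and connected. Then (1) $\chi_T(T')\le2$; (2) $\chi_T(T')=2$ if and only if $T'=T$; (3) $\chi_T(T')=1$ if and only if $T'$ is a branch of $T$.
   Context: A tree $T$ is a finite connected graph without cycles, with vertex set $V$ and edge set $E$ (edges are $2$-element subsets of $V$), regarded as the set $V\sqcup E$, with the topology whose closed sets are the sub-graphs (subsets containing both endpoints of each edge they contain). For a vertex $v$, $E_v$ is the set of edges containing $v$, $\mathrm{val}(v)=\mathrm{card}\,E_v$, $\chi_T(v):=2-\mathrm{val}(v)$, and for a subset $T'$, $\chi_T(T'):=\sum_{v\in V\cap T'}\chi_T(v)$. A branch of $T$ is a set $B_v(e)$, for a vertex $v$ and $e\in E_v$, defined as the connected component of $T\setminus\{v\}$ containing $e$. *)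

(* A tree T = (V, E) with E a set of 2-element subsets of V,
   regarded as the finite tspace V ⊔ E, encoded as points of type V + {set V}. *)
From HB Require Import structures.
From mathcomp Require Import all_boot all_order all_algebra.
Set Implicit Arguments. Unset Strict Implicit. Unset Printing Implicit Defensive.
Import Order.TTheory GRing.Theory Num.Theory.

Section TreeDefs.
Variables (V : finType) (E : {set {set V}}).

Definition pt := (V + {set V})%type.

Definition tspace : {set pt} :=
  [set p : pt | match p with inl _ => true | inr s => s \in E end].

Definition adj : rel V := fun x y => [set x; y] \in E.

Definition is_graph : Prop := forall s, s \in E -> #|s| = 2.

Definition is_tree : Prop :=
  is_graph /\
  (forall x y : V, connect adj x y) /\
  ~ (exists p : seq V, [/\ uniq p, 2 < size p & cycle adj p]).

(* closed sets = subgraphs *)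
Definition is_closed (A : {set pt}) : Prop :=
  A \subset tspace /\
  forall s v, s \in E -> inr s \in A -> v \in s -> inl v \in A.

Definition is_open (U : {set pt}) : Prop :=
  U \subset tspace /\ is_closed (tspace :\: U).

Definition is_connected (S : {set pt}) : Prop :=
  ~ (exists O1 O2 : {set pt},
       [/\ is_open O1, is_open O2,
           S :&: O1 != set0, S :&: O2 != set0 &
           (S \subset O1 :|: O2) && (S :&: O1 :&: O2 == set0)]).

Definition Ev (v : V) : {set {set V}} := [set s in E | v \in s].
Definition valence (v : V) : nat := #|Ev v|.

Local Open Scope ring_scope.
Definition chi (v : V) : int := 2%:Z - (valence v)%:Z.
Definition chiS (A : {set pt}) : int := \sum_(v : V | inl v \in A) chi v.

(* the branch B_v(e): connected component of T \ {v} containing e *)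
Definition is_branch_at (v : V) (e : {set V}) (B : {set pt}) : Prop :=
  forall y : pt, y \in B <->
    exists C : {set pt}, [/\ is_connected C, C \subset tspace :\ inl v,
                             inr e \in C & y \in C].

Definition is_branch (B : {set pt}) : Prop :=
  exists v e, e \in Ev v /\ is_branch_at v e B.

End TreeDefs.

(* The vertices W of an open set T' carry all their incident edges, and the
   connectedness of T' makes the subgraph induced on W connected, hence a
   subtree with #|W| - 1 edges.  Counting incidences, the valences over W add
   up to twice the number of edges inside W plus the number h of edges with
   exactly one endpoint in W, so chi(T') = 2 - h.  Now h = 0 forces W to be
   closed under adjacency, i.e. T' = T, and h = 1, with boundary edge {a, v}
   and a in W, says that T' is the component of T \ {v} containing {a, v}.
   An open set without vertices has chi = 0 and is neither T nor a branch. *)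
From mathcomp Require Import all_boot all_order all_algebra.
From mathcomp Require Import zify.
Import Order.TTheory GRing.Theory Num.Theory.
Set Implicit Arguments. Unset Strict Implicit. Unset Printing Implicit Defensive.

Lemma cards_sep (T : finType) (A : {set T}) (P : pred T) :
  #|[set x in A | P x]| = \sum_(x in A) P x.
Proof.
rewrite -sum1_card big_mkcond [RHS]big_mkcond; apply: eq_bigr => x _.
by rewrite !inE; case: (x \in A); case: (P x).
Qed.

Lemma card_set2I (T : finType) (a b : T) (A : {set T}) : a != b ->
  #|[set a; b] :&: A| = (a \in A) + (b \in A).
Proof.
move=> ab; have -> : [set a; b] :&: A = [set x in [set a; b] | x \in A].
  by apply/setP => x; rewrite !inE.
by rewrite cards_sep big_setU1 ?big_set1 ?inE //= eq_sym.
Qed.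

Section Tree.
Variables (V : finType) (E : {set {set V}}).
Hypothesis graphE : is_graph E.

Lemma edgeP s : s \in E -> exists a b, a != b /\ s = [set a; b].
Proof. by move=> /graphE /eqP /cards2P. Qed.

Lemma edge_other s a : s \in E -> a \in s -> exists b, a != b /\ s = [set a; b].
Proof.
move=> sE; have [x [y [xy ->]]] := edgeP sE.
rewrite !inE => /orP[]/eqP->; first by exists y.
by exists x; rewrite eq_sym xy setUC.
Qed.

Lemma adjC x y : adj E x y = adj E y x.
Proof. by rewrite /adj setUC. Qed.

Lemma adj_neq x y : adj E x y -> x != y.
Proof. by move=> /graphE; rewrite cards2; case: (x != y). Qed.

Lemma inl_tspace v : inl v \in tspace E. Proof. by rewrite inE. Qed.
Lemma inr_tspace s : (inr s \in tspace E) = (s \in E). Proof. by rewrite inE. Qed.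

Lemma openP (U : {set pt V}) : is_open E U <->
  U \subset tspace E /\ forall v s, s \in E -> v \in s -> inl v \in U -> inr s \in U.
Proof.
split=> [[sU [_ clU]]|[sU opU]].
  split=> // v s sE vs vU; apply/negPn/negP => sU'.
  have : inl v \in tspace E :\: U by apply: (clU s) => //; rewrite in_setD sU' inr_tspace.
  by rewrite in_setD vU.
split=> //; split=> [|s v sE]; first exact: subsetDl.
rewrite !in_setD inl_tspace inr_tspace andbT => /andP[sU' _] vs.
by apply: contra sU' => /(opU _ _ sE vs).
Qed.

Lemma connected_sep (S O1 O2 : {set pt V}) :
  is_connected E S -> is_open E O1 -> is_open E O2 ->
  {in S, forall p, (p \in O1) || (p \in O2)} ->
  {in S, forall p, p \in O1 -> p \notin O2} ->
  {in S &, forall p q, p \in O1 -> q \in O1}.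
Proof.
move=> connS o1 o2 cov dis p q pS qS pO1; apply/negPn/negP => qO1.
apply: connS; exists O1, O2; split=> //.
- by apply/set0Pn; exists p; rewrite inE pS pO1.
- by apply/set0Pn; exists q; rewrite inE qS; move: (cov q qS); rewrite (negPf qO1).
- apply/andP; split; first by apply/subsetP => x xS; rewrite inE cov.
  apply/eqP/setP => x; rewrite !inE; apply/negP => /andP[/andP[xS xO1]].
  exact/negP/dis.
Qed.

Lemma connected_intro (S : {set pt V}) :
  (forall O1 O2, is_open E O1 -> is_open E O2 ->
     {in S, forall p, (p \in O1) || (p \in O2)} ->
     {in S, forall p, p \in O1 -> p \notin O2} ->
     {in S &, forall p q, p \in O1 -> q \in O1}) ->
  is_connected E S.
Proof.
move=> sepS [O1 [O2 [o1 o2 /set0Pn[p /setIP[pS pO1]] /set0Pn[q /setIP[qS qO2]]]]].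
move=> /andP[/subsetP coverS /eqP disjS].
have dis x : x \in S -> x \in O1 -> x \notin O2.
  move=> xS xO1; apply/negP => xO2.
  have : x \in S :&: O1 :&: O2 by rewrite !inE xS xO1 xO2.
  by rewrite disjS inE.
have cov x : x \in S -> (x \in O1) || (x \in O2) by move=> /coverS; rewrite inE.
by have := dis q qS (sepS O1 O2 o1 o2 cov dis p q pS qS pO1); rewrite qO2.
Qed.

Lemma connected_set1 p : is_connected E [set p].
Proof. by apply: connected_intro => O1 O2 _ _ _ _ x y; rewrite !inE => /eqP-> /eqP->. Qed.

Lemma connected_setU1 (S : {set pt V}) s b :
  is_connected E S -> s \in E -> inr s \in S -> b \in s -> is_connected E (inl b |: S).
Proof.
move=> connS sE sS bs; apply: connected_intro => O1 O2 o1 o2 cov dis.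
have [_ op1] := proj1 (openP O1) o1; have [_ op2] := proj1 (openP O2) o2.
have sbS : inr s \in inl b |: S by rewrite setU1r.
have same_side x : x \in inl b |: S -> exists2 y, y \in S & (x \in O1) = (y \in O1).
  rewrite in_setU1 => /orP[/eqP->|xS]; last by exists x.
  exists (inr s) => //; case b1: (inl b \in O1); first by rewrite (op1 _ _ sE bs b1).
  have /(op2 _ _ sE bs) s2 : inl b \in O2 by move: (cov _ (setU11 _ _)); rewrite b1.
  by apply/esym/negP => /(dis _ sbS); rewrite s2.
have covS x : x \in S -> (x \in O1) || (x \in O2) by move=> xS; rewrite cov ?setU1r.
have disS x : x \in S -> x \in O1 -> x \notin O2 by move=> xS; apply: dis; rewrite setU1r.
move=> p q pS qS; have [p' p'S ->] := same_side p pS; have [q' q'S ->] := same_side q qS.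
exact: (connected_sep connS o1 o2 covS disS p'S q'S).
Qed.

Definition adj_in (K : {set V}) : rel V := [rel x y | [&& x \in K, y \in K & adj E x y]].
Definition connected_in (K : {set V}) := {in K &, forall x y, connect (adj_in K) x y}.

Lemma adj_in_sym K : symmetric (adj_in K).
Proof. by move=> x y; rewrite /adj_in /= adjC andbCA. Qed.

Definition vertices (A : {set pt V}) : {set V} := [set v | inl v \in A].

Lemma in_vertices A v : (v \in vertices A) = (inl v \in A).
Proof. by rewrite inE. Qed.

(* The smallest open set containing the vertex set [K]. *)
Definition open_star (K : {set V}) : {set pt V} :=
  [set p | match p with
           | inl x => x \in K
           | inr s => (s \in E) && [exists x in s, x \in K] end].

Lemma open_star_open K : is_open E (open_star K).
Proof.
apply/openP; split; first by apply/subsetP => -[x|s]; rewrite !inE // => /andP[].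
by move=> v s sE vs; rewrite !inE sE => vK; apply/existsP; exists v; rewrite vs.
Qed.

Lemma open_setD_star (T' : {set pt V}) (K : {set V}) : is_open E T' ->
  {in K, forall x y, inl y \in T' -> adj E x y -> y \in K} ->
  is_open E (T' :\: open_star K).
Proof.
move=> /openP[sT opT] closedK; apply/openP; split; first exact: subset_trans (subsetDl _ _) sT.
move=> v s sE vs; rewrite !in_setD !inE sE => /andP[vK vT]; rewrite (opT _ _ sE vs vT) andbT.
apply/existsP => -[x /andP[xs xK]].
have [y [_ sxy]] := edge_other sE xs.
have vy : v = y.
  by move: vs; rewrite sxy !inE => /orP[]/eqP // vx; rewrite vx xK in vK.
by move: vK; rewrite (closedK x xK) // vy /adj -sxy.
Qed.

Lemma sub_open_star (T' : {set pt V}) (K : {set V}) w0 : is_open E T' -> is_connected E T' ->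
  inl w0 \in T' -> w0 \in K -> {in K, forall x y, inl y \in T' -> adj E x y -> y \in K} ->
  T' \subset open_star K.
Proof.
move=> oT connT w0T w0K closedK; apply/subsetP => p pT.
have w0star : inl w0 \in open_star K by rewrite inE.
apply: (connected_sep connT (open_star_open K) (open_setD_star oT closedK) _ _ w0T pT w0star).
  by move=> q qT; rewrite in_setD qT andbT orbN.
by move=> q _ q1; rewrite in_setD q1.
Qed.

Lemma sub_open_star_component (T' : {set pt V}) w0 : is_open E T' -> is_connected E T' ->
  w0 \in vertices T' ->
  T' \subset open_star [set x in vertices T' | connect (adj_in (vertices T')) w0 x].
Proof.
move=> oT connT w0W; apply: (sub_open_star (w0 := w0)) => //.
- by rewrite -in_vertices.
- by rewrite inE w0W connect0.
move=> x; rewrite inE => /andP[xW w0x] y yT xy; rewrite inE in_vertices yT.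
by apply: connect_trans w0x (connect1 _); rewrite /adj_in /= xW in_vertices yT.
Qed.

Lemma connected_in_vertices (T' : {set pt V}) :
  is_open E T' -> is_connected E T' -> connected_in (vertices T').
Proof.
move=> oT connT x y xW yW.
have := subsetP (sub_open_star_component oT connT xW) (inl y).
by rewrite !inE -in_vertices => /(_ yW) /andP[].
Qed.

Lemma edge_meets_vertices (T' : {set pt V}) s :
  is_open E T' -> is_connected E T' -> vertices T' != set0 ->
  inr s \in T' -> exists2 z, z \in s & z \in vertices T'.
Proof.
move=> oT connT /set0Pn[w0 w0W] /(subsetP (sub_open_star_component oT connT w0W)).
by rewrite inE => /andP[_ /existsP[z /andP[zs]]]; rewrite inE => /andP[zW _]; exists z.
Qed.

Definition inner_edges (K : {set V}) := [set s in E | s \subset K].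
Definition boundary_edges (K : {set V}) := [set s in E | #|s :&: K| == 1].

Lemma card_edgeI (K : {set V}) s : s \in E ->
  #|s :&: K| = 2 * (s \subset K) + (#|s :&: K| == 1).
Proof.
move=> /edgeP[a [b [ab ->]]]; rewrite card_set2I // subUset !sub1set.
by case: (a \in K); case: (b \in K).
Qed.

Lemma sum_valence (K : {set V}) :
  \sum_(v in K) valence E v = 2 * #|inner_edges K| + #|boundary_edges K|.
Proof.
have valE v : valence E v = \sum_(s in E) (v \in s) by rewrite /valence /Ev cards_sep.
under eq_bigr do rewrite valE.
rewrite exchange_big /inner_edges /boundary_edges !cards_sep big_distrr -big_split /=.
apply: eq_bigr => s sE; rewrite -card_edgeI // -cards_sep.
by apply: eq_card => x; rewrite !inE andbC.
Qed.

Lemma boundary_edge_set2 (K : {set V}) a b : a \in K -> b \notin K ->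
  [set a; b] \in E -> [set a; b] \in boundary_edges K.
Proof.
move=> aK bK abE; rewrite inE abE card_set2I ?aK ?(negPf bK) //.
exact: adj_neq abE.
Qed.

Hypothesis acyclicE : ~ (exists p : seq V, [/\ uniq p, 2 < size p & cycle (adj E) p]).

Lemma path_adj_in (K : {set V}) x q : path (adj_in K) x q -> {subset q <= K}.
Proof.
elim: q x => [|y q IHq] x //= /andP[/and3P[_ yK _] /IHq qK] z.
by rewrite inE => /orP[/eqP->|/qK].
Qed.

(* Two neighbours of [u] in [K] would close a cycle through a path inside [K]. *)
Lemma connected_in_unique_neighbor (K : {set V}) u k1 k2 : connected_in K ->
  u \notin K -> k1 \in K -> k2 \in K -> adj E u k1 -> adj E u k2 -> k1 = k2.
Proof.
move=> connK uK k1K k2K uk1 uk2; apply/eqP/negPn/negP => k12.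
have /connectP[p pp lp] := connK _ _ k1K k2K.
case: (shortenP pp) lp => q pq uq _ lq.
have qK := path_adj_in pq.
apply: acyclicE; exists [:: u, k1 & q]; split.
- by rewrite cons_uniq uq andbT inE negb_or; apply/andP; split;
    [apply: contraNneq uK => -> | apply: contra uK => /qK].
- by case: q {pq uq qK} lq => // /= e; rewrite e eqxx in k12.
- rewrite /= uk1 rcons_path (sub_path _ pq) /=; last by move=> ? ? /and3P[].
  by rewrite -lq adjC.
Qed.

Lemma connected_in_setU1 (K : {set V}) u k : connected_in K -> k \in K -> adj E u k ->
  connected_in (u |: K).
Proof.
move=> connK kK uk.
have adj_inU x y : adj_in K x y -> adj_in (u |: K) x y.
  by case/and3P => xK yK xy; rewrite /adj_in /= !inE xK yK xy !orbT.
have inK x y : x \in K -> y \in K -> connect (adj_in (u |: K)) x y.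
  by move=> xK yK; apply: connect_sub (connK _ _ xK yK) => a b /adj_inU /connect1.
have uk' : connect (adj_in (u |: K)) u k.
  by apply: connect1; rewrite /adj_in /= !inE eqxx kK uk orbT.
have ku' : connect (adj_in (u |: K)) k u by rewrite (sym_connect_sym (@adj_in_sym _)).
move=> x y; rewrite !inE => /orP[/eqP->|xK] /orP[/eqP->|yK].
- exact: connect0.
- exact: connect_trans uk' (inK _ _ kK yK).
- exact: connect_trans (inK _ _ xK kK) ku'.
- exact: inK.
Qed.

Lemma inner_edges_setU1 (K : {set V}) u k : connected_in K -> u \notin K -> k \in K ->
  adj E u k -> inner_edges (u |: K) = [set u; k] |: inner_edges K.
Proof.
move=> connK uK kK uk; apply/setP => s; rewrite !inE; apply/idP/idP.
  case/andP => sE sub; case us: (u \in s).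
    have [b [ub sb]] := edge_other sE us; subst s.
    have bK : b \in K.
      by move/subsetP: sub => /(_ b); rewrite !inE eqxx orbT eq_sym (negPf ub) => /(_ isT).
    by rewrite (connected_in_unique_neighbor connK uK kK bK uk sE) eqxx.
  apply/orP; right; rewrite sE; apply/subsetP => x xs.
  by move/subsetP: sub => /(_ x xs); rewrite in_setU1 => /orP[/eqP ux|//]; rewrite -ux xs in us.
case/orP => [/eqP->|/andP[sE sK]]; last by rewrite sE (subset_trans sK (subsetUr _ _)).
by rewrite -/(adj E u k) uk subUset !sub1set !inE eqxx kK orbT.
Qed.

Lemma connected_in_neighbor (W K : {set V}) x k0 : connected_in W -> K \subset W ->
  k0 \in K -> x \in W :\: K -> exists u k, [/\ u \in W :\: K, k \in K & adj E u k].
Proof.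
move=> connW sKW k0K; rewrite inE => /andP[xK xW].
have [/existsP[u /existsP[k /and3P[uWK kK uk]]]|noNb] :=
  boolP [exists u, exists k, [&& u \in W :\: K, k \in K & adj E u k]].
  by exists u, k.
have closedK : closed (adj_in W) K.
  move=> y z /and3P[yW zW yz]; apply/idP/idP => [yK|zK]; apply/negPn/negP => nK;
    apply: (negP noNb); apply/existsP.
  - by exists z; apply/existsP; exists y; rewrite !inE nK zW yK adjC.
  - by exists y; apply/existsP; exists z; rewrite !inE nK yW zK.
have := closed_connect closedK (connW _ _ (subsetP sKW _ k0K) xW).
by rewrite k0K (negPf xK).
Qed.

Lemma card_inner_edges (W : {set V}) : connected_in W -> W != set0 ->
  #|inner_edges W| + 1 = #|W|.
Proof.
move=> connW /set0Pn[w0 w0W].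
suff grow n (K : {set V}) : #|W :\: K| = n -> K \subset W -> w0 \in K -> connected_in K ->
    #|inner_edges K| + 1 = #|K| -> #|inner_edges W| + 1 = #|W|.
  apply: (grow _ [set w0] erefl); rewrite ?sub1set ?set11 //.
    by move=> x y; rewrite !inE => /eqP-> /eqP->; apply: connect0.
  suff -> : inner_edges [set w0] = set0 by rewrite cards0 cards1.
  apply/setP=> s; rewrite !inE; apply/negP => /andP[/graphE s2 /subset_leq_card].
  by rewrite s2 cards1.
elim: n K => [|n IHn] K dK sKW w0K connK cardK.
  suff -> : W = K by [].
  by apply/eqP; rewrite eqEsubset sKW -setD_eq0 -cards_eq0 dK.
have /set0Pn[x xWK] : W :\: K != set0 by rewrite -card_gt0 dK.
have [u [k [uWK kK uk]]] := connected_in_neighbor connW sKW w0K xWK.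
move: uWK; rewrite inE => /andP[uK uW].
apply: (IHn (u |: K)); rewrite ?setU1r //.
- by move: dK; rewrite (cardsD1 u) !inE uK uW setDDl setUC => -[].
- by rewrite subUset sub1set uW.
- exact: (connected_in_setU1 connK kK uk).
- by rewrite (inner_edges_setU1 connK uK kK uk) !cardsU1 inE negb_and subUset
    !sub1set (negPf uK) orbT -cardK.
Qed.

Hypothesis connectedE : forall x y : V, connect (adj E) x y.

Lemma vertices_tspace : vertices (tspace E) = setT.
Proof. by apply/setP => x; rewrite in_vertices inl_tspace inE. Qed.

Lemma boundary_edges_eq0 (T' : {set pt V}) : is_open E T' -> vertices T' != set0 ->
  boundary_edges (vertices T') = set0 <-> T' = tspace E.
Proof.
move=> /openP[sT opT] /set0Pn[w0 w0W]; split=> [bd0|->]; last first.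
  apply/setP => s; rewrite vertices_tspace !inE setIT.
  by apply/negP => /andP[/graphE ->].
have closedW : closed (adj E) (vertices T').
  move=> y z yz; apply/idP/idP => [yW|zW]; apply/negPn/negP => nW.
  - by have := boundary_edge_set2 yW nW yz; rewrite bd0 inE.
  - by have := boundary_edge_set2 zW nW (etrans (adjC _ _) yz); rewrite bd0 inE.
have allW x : inl x \in T' by rewrite -in_vertices -(closed_connect closedW (connectedE w0 x)).
apply/setP => -[x|s]; first by rewrite inl_tspace allW.
rewrite inr_tspace; apply/idP/idP => [/(subsetP sT)|sE]; first by rewrite inr_tspace.
have [a [b [_ sab]]] := edgeP sE.
by apply: (opT a); rewrite ?allW // sab !inE eqxx.
Qed.

Lemma branch_at_mem (T' : {set pt V}) v e0 : is_branch_at E v e0 T' -> e0 \in Ev E v ->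
  exists u, [/\ e0 = [set v; u], inl v \notin T', inr e0 \in T' & inl u \in T'].
Proof.
move=> brT; rewrite inE => /andP[e0E ve0].
have [u [vu e0vu]] := edge_other e0E ve0.
have e0v : inr e0 \in tspace E :\ inl v by rewrite in_setD1 inr_tspace e0E.
exists u; split=> //.
- apply/negP => /(proj1 (brT _)) [C [_ /subsetP sub _ /sub]].
  by rewrite in_setD1 eqxx.
- apply/(proj2 (brT _)); exists [set inr e0]; split; rewrite ?set11 ?sub1set //.
  exact: connected_set1.
- apply/(proj2 (brT _)); exists (inl u |: [set inr e0]); split; rewrite ?setU11 ?setU1r ?set11 //.
  + have ue0 : u \in e0 by rewrite e0vu !inE eqxx orbT.
    exact: connected_setU1 (connected_set1 (p := inr e0)) e0E (set11 _) ue0.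
  + rewrite subUset !sub1set e0v in_setD1 inl_tspace !andbT.
    by apply: contraNneq vu => -[->].
Qed.

(* An edge leaving the vertices of the branch [T'] either is [e0] itself or,
   through its outer endpoint, enlarges [T'] to a connected set avoiding [v]. *)
Lemma branch_crossing_edge (T' : {set pt V}) v e0 a b :
  is_open E T' -> is_connected E T' -> is_branch_at E v e0 T' -> e0 \in Ev E v ->
  a \in vertices T' -> b \notin vertices T' -> [set a; b] \in E -> [set a; b] = e0.
Proof.
move=> oT connT brT e0v aW bW abE; have [sT opT] := proj1 (openP T') oT.
have [u [e0vu vT e0T uT]] := branch_at_mem brT e0v.
have abT : inr [set a; b] \in T' by apply: (opT a); rewrite -?in_vertices // !inE eqxx.
have [bv|bv] := eqVneq b v.
  subst b; have vu' : adj E v u by rewrite /adj -e0vu; case/setIdP: e0v.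
  have va : adj E v a by rewrite adjC.
  have vW : v \notin vertices T' by rewrite in_vertices.
  have uW : u \in vertices T' by rewrite in_vertices.
  have connW := connected_in_vertices oT connT.
  by rewrite setUC e0vu (connected_in_unique_neighbor connW vW aW uW va vu').
suff : inl b \in T' by rewrite -in_vertices (negPf bW).
apply/(proj2 (brT _)); exists (inl b |: T'); split; rewrite ?setU11 ?setU1r //.
- by apply: connected_setU1 connT abE abT _; rewrite !inE eqxx orbT.
- by rewrite subUset sub1set subsetD1 sT vT in_setD1 inl_tspace andbT /= bv.
Qed.

Lemma boundary_edges_branch (T' : {set pt V}) v e0 :
  is_open E T' -> is_connected E T' -> is_branch_at E v e0 T' -> e0 \in Ev E v ->
  boundary_edges (vertices T') = [set e0].
Proof.
move=> oT connT brT e0v; have [u [e0vu vT _ uT]] := branch_at_mem brT e0v.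
have e0E : e0 \in E by case/setIdP: e0v.
have vu : v != u by apply: adj_neq; rewrite /adj -e0vu.
apply/setP => s; rewrite !inE; apply/idP/idP => [/andP[sE]|/eqP->]; last first.
  by rewrite e0E e0vu card_set2I // !in_vertices (negPf vT) uT.
have [a [b [ab sab]]] := edgeP sE; rewrite sab card_set2I //.
case aW: (a \in vertices T'); case bW: (b \in vertices T') => //= _; apply/eqP.
  by apply: branch_crossing_edge oT connT brT e0v _ _ _; rewrite ?aW ?bW // -sab.
by rewrite setUC; apply: branch_crossing_edge oT connT brT e0v _ _ _; rewrite ?aW ?bW // setUC -sab.
Qed.

Lemma open_outside_boundary (T' : {set pt V}) a v :
  is_open E T' -> is_connected E T' -> boundary_edges (vertices T') = [set [set a; v]] ->
  a \in vertices T' -> v \notin vertices T' ->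
  is_open E (tspace E :\: T' :\ inl v :\ inr [set a; v]).
Proof.
move=> oT connT bd aW vW; have [sT opT] := proj1 (openP T') oT.
apply/openP; split; first by apply/subsetP => p; rewrite !in_setD1 in_setD => /and3P[_ _ /andP[]].
move=> x s sE xs; rewrite !in_setD1 !in_setD inr_tspace sE andbT /=.
move=> /and3P[xv xT _]; have xW : x \notin vertices T' by rewrite in_vertices.
apply/andP; split.
  apply: contraNneq xW => -[se0]; move: xs; rewrite se0 !inE => /orP[]/eqP xav.
    by rewrite xav -in_vertices.
  by rewrite xav eqxx in xv.
apply/negP => /(edge_meets_vertices oT connT) [|z zs zW]; first by apply/set0Pn; exists a.
have [y [xy sxy]] := edge_other sE xs.
have zy : z = y by move: zs; rewrite sxy !inE => /orP[]/eqP // zx; rewrite -zx zW in xW.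
have : s \in boundary_edges (vertices T').
  by rewrite sxy setUC; apply: boundary_edge_set2; [rewrite -zy | | rewrite setUC -sxy].
rewrite bd inE => /eqP se0; move: xs; rewrite se0 !inE => /orP[]/eqP xav.
  by rewrite xav aW in xW.
by rewrite xav eqxx in xv.
Qed.

Lemma branch_of_boundary_edge (T' : {set pt V}) a v :
  is_open E T' -> is_connected E T' -> boundary_edges (vertices T') = [set [set a; v]] ->
  a \in vertices T' -> v \notin vertices T' -> is_branch_at E v [set a; v] T'.
Proof.
move=> oT connT bd aW vW; have [sT opT] := proj1 (openP T') oT.
have e0E : [set a; v] \in E by have := set11 [set a; v]; rewrite -bd inE => /andP[].
have e0T : inr [set a; v] \in T' by apply: (opT a); rewrite -?in_vertices // !inE eqxx.
have vT : inl v \notin T' by rewrite -in_vertices.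
move=> y; split=> [yT|[C [connC /subsetP sC e0C yC]]].
  by exists T'; split; rewrite // subsetD1 sT vT.
apply: (connected_sep connC oT (open_outside_boundary oT connT bd aW vW) _ _ e0C yC e0T).
  move=> q /sC; rewrite !in_setD1 in_setD => /andP[qv qtsp].
  by case qT: (q \in T'); rewrite //= qv qtsp !andbT; apply: contraFneq qT => ->.
by move=> q _ qT; rewrite !in_setD1 in_setD qT !andbF.
Qed.

Lemma boundary_edges_card1 (T' : {set pt V}) : is_open E T' -> is_connected E T' ->
  #|boundary_edges (vertices T')| = 1 <-> is_branch E T'.
Proof.
move=> oT connT; split=> [/eqP/cards1P[e0 bd]|[v [e0 [e0v brT]]]]; last first.
  by rewrite (boundary_edges_branch oT connT brT e0v) cards1.
have : e0 \in boundary_edges (vertices T') by rewrite bd set11.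
rewrite inE => /andP[e0E]; have [a [b [ab e0ab]]] := edgeP e0E; subst e0.
have branch_set2 x y : x \in vertices T' -> y \notin vertices T' ->
    [set x; y] = [set a; b] -> is_branch E T'.
  move=> xW yW exy; exists y, [set x; y]; split.
    by rewrite inE exy e0E -exy !inE eqxx orbT.
  by apply: branch_of_boundary_edge; rewrite ?exy.
rewrite card_set2I //; case aW: (a \in vertices T'); case bW: (b \in vertices T') => // _.
  exact: branch_set2 a b aW (negbT bW) erefl.
exact: branch_set2 b a bW (negbT aW) (setUC _ _).
Qed.

Local Open Scope ring_scope.

Lemma chiS_vertices (T' : {set pt V}) : chiS E T' = \sum_(v in vertices T') chi E v.
Proof. by apply: eq_bigl => v; rewrite in_vertices. Qed.

Lemma chiS_open_connected (T' : {set pt V}) :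
  is_open E T' -> is_connected E T' -> vertices T' != set0 ->
  chiS E T' = 2 - #|boundary_edges (vertices T')|%:Z.
Proof.
move=> oT connT W0; set W := vertices T'.
have inner := card_inner_edges (connected_in_vertices oT connT) W0.
have valences := sum_valence W.
rewrite chiS_vertices /chi sumrB sumr_const -/W.
have -> : \sum_(v in W) (valence E v)%:Z = (\sum_(v in W) valence E v)%N%:Z.
  by rewrite -natz natr_sum; apply: eq_bigr => v _; rewrite natz.
rewrite valences -inner -/W; lia.
Qed.

Lemma chiS_no_vertex (T' : {set pt V}) : is_open E T' -> T' != set0 ->
  vertices T' = set0 -> [/\ chiS E T' = 0, T' <> tspace E & ~ is_branch E T'].
Proof.
move=> /openP[sT _] /set0Pn[p pT] W0.
have noinl x : inl x \notin T' by rewrite -in_vertices W0 inE.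
split.
- by rewrite chiS_vertices W0 big_set0.
- case: p pT => [x|s] pT; first by rewrite (negPf (noinl x)) in pT.
  have sE : s \in E by rewrite -inr_tspace (subsetP sT _ pT).
  have [a _] := edgeP sE.
  by move=> T't; move: (noinl a); rewrite T't inl_tspace.
- move=> [v [e0 [e0v brT]]]; have [u [_ _ _ uT]] := branch_at_mem brT e0v.
  by rewrite (negPf (noinl u)) in uT.
Qed.

End Tree.

Local Open Scope ring_scope.

Theorem lemma2p9 (V : finType) (E : {set {set V}}) (T' : {set pt V}) :
  is_tree E -> T' != set0 -> is_open E T' -> is_connected E T' ->
  [/\ chiS E T' <= 2,
      chiS E T' = 2 <-> T' = tspace E
    & chiS E T' = 1 <-> is_branch E T'].
Proof.
move=> [graphE [connectedE acyclicE]] T'0 oT connT.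
have [W0|W0] := eqVneq (vertices T') set0.
  by have [-> ? ?] := chiS_no_vertex graphE oT T'0 W0.
rewrite (chiS_open_connected graphE acyclicE oT connT W0).
have bd0 := boundary_edges_eq0 graphE connectedE oT W0.
have bd1 := boundary_edges_card1 graphE acyclicE oT connT.
split; first lia.
- split=> [chi2|/bd0->]; last by rewrite cards0.
  by apply/bd0/eqP; rewrite -cards_eq0; apply/eqP; lia.
- split=> [chi1|/bd1->]; last by [].
  by apply/bd1; lia.
Qed.
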